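(* Let $\mathcal{E}$ be an even Dirichlet form on $L^2(X,m)$ and let $\mathfrak{D}$ be its Dirichlet space. Assume that the embedding $\mathfrak{D}\hookrightarrow L^2(X,m)$ is compact and that, for $f\in L^2(X,m)$, $\mathcal{E}(f)=0$ holds if and only if $f=0$. Then $\mathfrak{D}$ satisfies a Poincaré inequality: there is a constant $C>0$ such that $\|f\|_{\mathfrak{D}}\le C\,|f|_{\mathfrak{D}}$ for all $f\in\mathfrak{D}$ (equivalently, there is $C>0$ with $\|f\|_{L^2(X,m)}\le C\,|f|_{\mathfrak{D}}$ for all $f\in\mathfrak{D}$).
   Context: Standing setting: $X$ is a Hausdorff topological space and $m$ is a Borel measure on $X$ with full support, i.e. no nonempty open subset of $X$ has $m$-measure zero. $L^2(X,m)$ is the real $L^2$ space. A Dirichlet form is a functional $\mathcal{E}:L^2(X,m)\to[0,\infty]$ that is convex, lower semicontinuous and densely defined (its effective domain $\mathrm{dom}(\mathcal{E})=\{u:\mathcal{E}(u)<\infty\}$ is dense in $L^2(X,m)$), and such that for all $u,v\in L^2(X,m)$ and $\alpha>0$: (1) $\mathcal{E}(u\wedge v)+\mathcal{E}(u\vee v)\le \mathcal{E}(u)+\mathcal{E}(v)$; (2) $\mathcal{E}\big(v+\tfrac12((u-v+\alpha)_+-(u-v-\alpha)_-)\big)+\mathcal{E}\big(u-\tfrac12((u-v+\alpha)_+-(u-v-\alpha)_-)\big)\le \mathcal{E}(u)+\mathcal{E}(v)$, where $(\cdot)_+$, $(\cdot)_-$ denote positive and negative parts. $\mathcal{E}$ is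 called even if $\mathcal{E}(0)=0$ and $\mathcal{E}(-u)=\mathcal{E}(u)$ for all $u$. Set $\mathcal{E}_1(u)=\|u\|_{L^2(X,m)}^2+\mathcal{E}(u)$. The Dirichlet space is $\mathfrak{D}=\{u\in L^2(X,m):\exists\lambda>0,\ \mathcal{E}_1(\lambda u)<\infty\}$ with the Minkowski norm $\|u\|_{\mathfrak{D}}=\inf\{\lambda>0:\mathcal{E}_1(u/\lambda)\le 1\}$ and the seminorm $|u|_{\mathfrak{D}}=\inf\{\lambda>0:\mathcal{E}(u/\lambda)\le 1\}$. *)

From HB Require Import structures.
From mathcomp Require Import all_boot all_order all_algebra.
From mathcomp Require Import all_classical all_reals all_analysis.
Set Implicit Arguments. Unset Strict Implicit. Unset Printing Implicit Defensive.
Import Order.TTheory GRing.Theory Num.Def Num.Theory.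
Import numFieldNormedType.Exports.
Local Open Scope classical_set_scope.
Local Open Scope ring_scope.

Notation Borel X := (g_sigma_algebraType (@open X)).

Section Dirichlet.
Context (X : ptopologicalType) (R : realType).
Variable m : {measure set (Borel X) -> \bar R}.

Definition full_support := forall U : set X, open U -> U !=set0 -> m U != 0%E.

(* L^2(X,m) is represented by its (measurable, square integrable)
   representatives; two representatives are identified when equal m-a.e. *)
Definition L2 : set (X -> R) := [set f | f \in Lfun m 2%:E].
Definition L2norm (f : X -> R) : R := fine ('N[m]_2%:E[EFin \o f])%E.
Definition L2eq (f g : X -> R) : Prop := f = g %[ae m].

Definition pospart (h : X -> R) : X -> R := fun x => Num.max (h x) 0.
Definition negpart (h : X -> R) : X -> R := fun x => Num.max (- h x) 0.

Variable E : (X -> R) -> \bar R.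

Definition functional_on_L2 :=
  (forall f, L2 f -> (0 <= E f)%E) /\
  (forall f g, L2 f -> L2 g -> L2eq f g -> E f = E g).

Definition convex_functional := forall f g (t : R), L2 f -> L2 g ->
  0 <= t <= 1 ->
  (E (fun x => t * f x + (1 - t) * g x)%R <= t%:E * E f + (1 - t)%:E * E g)%E.

Definition lsc_functional := forall f (a : \bar R), L2 f -> (a < E f)%E ->
  exists2 eps : R, 0 < eps &
    forall g, L2 g -> L2norm (g \- f) < eps -> (a < E g)%E.

Definition densely_defined := forall f (eps : R), L2 f -> 0 < eps ->
  exists2 g, L2 g & (E g < +oo)%E /\ L2norm (f \- g) < eps.

Definition lattice_property :=
    (forall u v, L2 u -> L2 v ->
       (E (fun x => Num.min (u x) (v x))%R + E (fun x => Num.max (u x) (v x))%R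
          <= E u + E v)%E).

Definition contraction_property :=
    (forall u v (alpha : R), L2 u -> L2 v -> 0 < alpha ->
       let w := pospart (fun x => u x - v x + alpha) \-
                negpart (fun x => u x - v x - alpha) in
       (E (fun x => v x + 2^-1 * w x)%R + E (fun x => u x - 2^-1 * w x)%R
          <= E u + E v)%E).

Definition dirichlet_form :=
  [/\ functional_on_L2, convex_functional, lsc_functional, densely_defined
    & lattice_property /\ contraction_property].

Definition even_functional :=
  E (fun _ => 0) = 0%E /\ forall u, L2 u -> E (fun x => - u x) = E u.

Definition E1 (u : X -> R) : \bar R := ((L2norm u ^+ 2)%:E + E u)%E.

Definition Dspace : set (X -> R) :=
  [set u | L2 u /\ exists2 l : R, 0 < l & (E1 (fun x => l * u x)%R < +oo)%E].

(* Minkowski norm and seminorm of the Dirichlet space *)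
Definition Dnorm (u : X -> R) : R :=
  inf [set l : R | 0 < l /\ (E1 (fun x => u x / l)%R <= 1)%E].
Definition Dseminorm (u : X -> R) : R :=
  inf [set l : R | 0 < l /\ (E (fun x => u x / l)%R <= 1)%E].

Definition compact_embedding := forall (u : nat -> X -> R) (M : R),
  (forall n, Dspace (u n)) -> (forall n, Dnorm (u n) <= M) ->
  exists (phi : nat -> nat) (f : X -> R),
    [/\ {homo phi : i j / (i < j)%N >-> (i < j)%N}, L2 f &
        (fun n => L2norm (u (phi n) \- f)) @ \oo --> 0].

End Dirichlet.

From HB Require Import structures.
From mathcomp Require Import all_boot all_order all_algebra.
From mathcomp Require Import all_classical all_reals all_analysis.
From mathcomp Require Import ring lra.

Set Implicit Arguments.
Unset Strict Implicit.
Unset Printing Implicit Defensive.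
Import Order.TTheory GRing.Theory Num.Def Num.Theory.
Import numFieldNormedType.Exports.
Local Open Scope classical_set_scope.
Local Open Scope ring_scope.

(* Compactness of the embedding and lower semicontinuity give a quantitative
   form of the hypothesis that only [0] has zero energy: functions of bounded
   [D]-norm and small energy have small [L^2] norm, for otherwise a subsequence
   would converge in [L^2] to a nonzero function of energy zero.  If [||f||_D]
   were much larger than [|f|_D], then [g = f / ||f||_D] would have bounded
   [D]-norm and small energy, hence small [L^2] norm; but then [E_1 (2 g) <= 1],
   i.e. [||f||_D <= ||f||_D / 2], which is absurd. *)

Section L2_facts.
Context (X : ptopologicalType) (R : realType)
  (m : {measure set (Borel X) -> \bar R}).

Let one_le2 : (1 <= 2%:E :> \bar R)%E. Proof. by rewrite lee_fin ler1n. Qed.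

Lemma L2Z (c : R) f : L2 m f -> L2 m (fun x => c * f x).
Proof. by rewrite /L2 /= => fL; apply: rpredZ. Qed.

Lemma L2_cst0 : L2 m (fun _ => 0).
Proof. by rewrite /L2 /=; apply: rpred0. Qed.

Lemma L2_div (c : R) f : L2 m f -> L2 m (fun x => f x / c).
Proof.
by move=> /(L2Z c^-1); under eq_fun => x do rewrite mulrC.
Qed.

Lemma L2_meas f : L2 m f -> measurable_fun [set: Borel X] f.
Proof. by rewrite /L2 /= inE => /andP[/[!inE]]. Qed.

Lemma L2norm_ge0 f : 0 <= L2norm m f.
Proof. by rewrite /L2norm fine_ge0 ?Lnorm_ge0. Qed.

Lemma L2normZ (c : R) f : L2 m f -> L2norm m (fun x => c * f x) = `|c| * L2norm m f.
Proof.
move=> fL; have fin : ('N[m]_2%:E[EFin \o f] \is a fin_num)%E.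
  move: fL; rewrite /L2 /= inE => /andP[_]; rewrite inE /= /finite_norm.
  by rewrite ge0_fin_numE ?Lnorm_ge0.
by rewrite /L2norm -[`|c|]/(fine `|c|%:E) -fineM // -(LnormZ (Lfun_Sub one_le2 fL)).
Qed.

Lemma L2norm_sub_null h g : L2 m h -> L2 m g -> L2eq m g (fun _ => 0) ->
  L2norm m (h \- g) = L2norm m h.
Proof.
move=> /L2_meas mh /L2_meas mg g0.
rewrite /L2norm; congr fine; rewrite unlock /Lnorm; congr (_ `^ _)%E.
have mpow2 (k : Borel X -> R) : measurable_fun setT k ->
    measurable_fun setT (fun x => `|k x| `^ 2).
  move=> mk; apply: (measurableT_comp (measurable_realfun.measurable_powR _)).
  exact: measurableT_comp.
apply: ae_eq_integral => //=.
- apply/measurable_realfun.measurable_EFinP; apply: mpow2.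
  exact: measurable_realfun.measurable_funB.
- by apply/measurable_realfun.measurable_EFinP; apply: mpow2.
- apply: (@filterS _ _ (ae_filter_ringOfSetsType m) _ _ _ g0) => x /= gx0 _.
  by rewrite /= gx0 // subr0.
Qed.

End L2_facts.

Section gauge.
Context (X : ptopologicalType) (R : realType)
  (m : {measure set (Borel X) -> \bar R}) (F : (X -> R) -> \bar R).

Definition gauge (f : X -> R) : set R :=
  [set l : R | 0 < l /\ (F (fun x => f x / l)%R <= 1)%E].

Hypothesis F_ge0 : forall f, L2 m f -> (0 <= F f)%E.
Hypothesis F_scale_le : forall (t : R) f, 0 <= t <= 1 -> L2 m f ->
  (F (fun x => t * f x)%R <= t%:E * F f)%E.

Lemma gauge_gt0 f l : gauge f l -> 0 < l.
Proof. by case. Qed.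

Lemma gaugeZ f l (c : R) : 0 < c -> gauge f l -> gauge (fun x => c * f x) (c * l).
Proof.
move=> c0 [l0 Fl]; split; first exact: mulr_gt0.
suff -> : (fun x => c * f x / (c * l)) = (fun x => f x / l) by [].
by apply/funext => x; field; rewrite !gt_eqF.
Qed.

Lemma gauge_scale_le f l (c : R) : L2 m f -> gauge f l -> 0 <= c -> c * l <= 1 ->
  (F (fun x => c * f x)%R <= (c * l)%:E)%E.
Proof.
move=> fL [l0 Fl] c0 cl1.
have -> : (fun x => c * f x) = (fun x => (c * l) * (f x / l)).
  by apply/funext => x; field; rewrite gt_eqF.
apply: le_trans (F_scale_le (t := c * l) _ (L2_div l fL)) _.
  by rewrite cl1 andbT mulr_ge0 // ltW.
by rewrite -[leRHS]mule1; apply: lee_wpmul2l => //; rewrite lee_fin mulr_ge0 // ltW.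
Qed.

Lemma gauge_le f l k : L2 m f -> l <= k -> gauge f l -> gauge f k.
Proof.
move=> fL lk gl; have k0 : 0 < k := lt_le_trans (gauge_gt0 gl) lk.
split=> //; under eq_fun => x do rewrite mulrC.
apply: le_trans (gauge_scale_le fL gl _ _) _.
- by rewrite invr_ge0 ltW.
- by rewrite mulrC ler_pdivrMr // mul1r.
- by rewrite lee_fin mulrC ler_pdivrMr // mul1r.
Qed.

Lemma gauge_gt_inf f k : L2 m f -> gauge f !=set0 -> inf (gauge f) < k -> gauge f k.
Proof. by move=> fL gf /(inf_lt gf)[l gl lk]; apply: gauge_le fL (ltW lk) gl. Qed.

Lemma inf_gauge_le f l : gauge f l -> inf (gauge f) <= l.
Proof. by move=> gl; apply: ge_inf => //; exists 0 => k /gauge_gt0/ltW. Qed.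

Lemma inf_gauge_ge0 f : 0 <= inf (gauge f).
Proof.
have [->|/set0P gf] := eqVneq (gauge f) set0; first by rewrite inf0.
by apply: lb_le_inf => // k /gauge_gt0/ltW.
Qed.

Lemma gauge_neq0 f (c : R) : L2 m f -> 0 < c -> (F (fun x => c * f x)%R < +oo)%E ->
  gauge f !=set0.
Proof.
move=> fL c0 Ffin.
have cfL : L2 m (fun x => c * f x) by exact: L2Z.
have Ffin_num : F (fun x => c * f x) \is a fin_num by rewrite ge0_fin_numE ?F_ge0.
set r := fine (F (fun x => c * f x)).
have r0 : 0 <= r by rewrite fine_ge0 ?F_ge0.
have t0 : 0 < (r + 1)^-1 by rewrite invr_gt0 ltr_wpDl.
exists ((r + 1)^-1 * c)^-1; split; first by rewrite invr_gt0 mulr_gt0.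
have -> : (fun x => f x / ((r + 1)^-1 * c)^-1) = (fun x => (r + 1)^-1 * (c * f x)).
  by apply/funext => x; rewrite invrK mulrC mulrA.
apply: le_trans (F_scale_le (t := (r + 1)^-1) _ cfL) _.
  by rewrite ltW //= invf_le1 ?ler_wpDl ?ltr_wpDl.
by rewrite -(fineK Ffin_num) -EFinM lee_fin mulrC ler_pdivrMr ?ltr_wpDl // mul1r lerDl.
Qed.

End gauge.

Section energy.
Context (X : ptopologicalType) (R : realType)
  (m : {measure set (Borel X) -> \bar R}) (E : (X -> R) -> \bar R).
Hypotheses (E_ge0 : forall f, L2 m f -> (0 <= E f)%E)
  (E_convex : convex_functional m E) (E_cst0 : E (fun _ => 0) = 0%E).

Lemma E_scale_le (t : R) f : 0 <= t <= 1 -> L2 m f ->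
  (E (fun x => t * f x)%R <= t%:E * E f)%E.
Proof.
move=> t01 fL; have := E_convex fL (L2_cst0 m) t01.
rewrite E_cst0 mule0 adde0.
by under eq_fun => x do rewrite mulr0 addr0.
Qed.

Lemma E1_ge0 f : L2 m f -> (0 <= E1 m E f)%E.
Proof. by move=> fL; rewrite adde_ge0 ?lee_fin ?sqr_ge0 ?E_ge0. Qed.

Lemma E_le_E1 f : (E f <= E1 m E f)%E.
Proof. by rewrite leeDr // lee_fin sqr_ge0. Qed.

Lemma E1_scale_le (t : R) f : 0 <= t <= 1 -> L2 m f ->
  (E1 m E (fun x => t * f x)%R <= t%:E * E1 m E f)%E.
Proof.
move=> /andP[t0 t1] fL.
rewrite /E1 ge0_muleDr ?lee_fin ?sqr_ge0 ?E_ge0 //.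
apply: leeD; last by apply: E_scale_le; rewrite ?t0.
rewrite L2normZ // ger0_norm // -EFinM lee_fin exprMn ler_wpM2r ?sqr_ge0 //.
by rewrite expr2 -[leRHS]mulr1 ler_wpM2l.
Qed.

Lemma gauge_E1_E f l : gauge (E1 m E) f l -> gauge E f l.
Proof. by move=> [l0 El]; split=> //; apply: le_trans El; apply: E_le_E1. Qed.

Lemma Dspace_gaugeP f : Dspace m E f <-> L2 m f /\ gauge (E1 m E) f !=set0.
Proof.
split=> [[fL [c c0 Efin]]|[fL [l [l0 El]]]].
  by split=> //; apply: gauge_neq0 fL c0 Efin; [exact: E1_ge0 | exact: E1_scale_le].
split=> //; exists l^-1; first by rewrite invr_gt0.
by under eq_fun => x do rewrite mulrC; apply: le_lt_trans El _; rewrite ltry.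
Qed.

Lemma Dspace_normalized f : Dspace m E f -> 0 < Dnorm m E f ->
  let g x := (Dnorm m E f)^-1 * f x in Dspace m E g /\ Dnorm m E g <= 2.
Proof.
move=> /Dspace_gaugeP[fL gauge1_neq0] d0 g.
have gauge_2d : gauge (E1 m E) f (2 * Dnorm m E f).
  by apply: (gauge_gt_inf E1_scale_le fL gauge1_neq0); rewrite ltr_pMl // ltr1n.
have := gaugeZ (_ : 0 < (Dnorm m E f)^-1) gauge_2d.
rewrite invr_gt0 mulrCA mulVf ?mulr1 ?gt_eqF // => /(_ d0) gauge_g.
split; last exact: inf_gauge_le gauge_g.
by apply/Dspace_gaugeP; split; [exact: L2Z | exists 2].
Qed.

Lemma Dnorm_le_of_energy_control (delta : R) : 0 < delta -> delta <= 4^-1 ->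
  (forall u, Dspace m E u -> Dnorm m E u <= 2 -> (E u <= delta%:E)%E ->
     L2norm m u <= 4^-1) ->
  forall f, Dspace m E f -> Dnorm m E f <= delta^-1 * Dseminorm E f.
Proof.
move=> delta0 delta_small control f fD.
have /Dspace_gaugeP[fL gauge1_neq0] := fD.
set d := Dnorm m E f; set s := Dseminorm E f.
rewrite leNgt; apply/negP => sd.
have d0 : 0 < d.
  apply: le_lt_trans sd; apply: mulr_ge0; [by rewrite invr_ge0 ltW | exact: inf_gauge_ge0].
have [l gauge_l ld] : exists2 l, gauge E f l & l / d < delta.
  have gaugeE_neq0 : gauge E f !=set0.
    by case: gauge1_neq0 => l /gauge_E1_E; exists l.
  have [|l gauge_l ls] := @inf_lt _ _ (delta * d) gaugeE_neq0.
    by move: sd; rewrite mulrC ltr_pdivrMr // mulrC.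
  by exists l; rewrite // ltr_pdivrMr.
pose g x := d^-1 * f x.
have [gD gN] : Dspace m E g /\ Dnorm m E g <= 2 := Dspace_normalized fD d0.
have Eg : (E g <= delta%:E)%E.
  apply: le_trans (gauge_scale_le E_scale_le fL gauge_l _ _) _.
  - by rewrite invr_ge0 ltW.
  - by rewrite mulrC; apply/ltW/(lt_le_trans ld); lra.
  - by rewrite lee_fin mulrC ltW.
have g_small := control g gD gN Eg.
have E2g : (E (fun x => 2 * g x)%R <= (2 * (l / d))%:E)%E.
  have -> : (fun x => 2 * g x) = (fun x => (2 / d) * f x).
    by apply/funext => x; rewrite /g mulrA.
  rewrite mulrA mulrAC; apply: (gauge_scale_le E_scale_le (c := 2 / d) fL gauge_l).
    by rewrite divr_ge0 // ltW.
  by rewrite -mulrA (mulrC d^-1); lra.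
(* [E1 (2 g) <= 4 (1/4)^2 + 2 delta <= 1], so [d / 2] is in the gauge of [f]. *)
have : gauge (E1 m E) f (d / 2).
  split; first by rewrite divr_gt0.
  have -> : (fun x => f x / (d / 2)) = (fun x => 2 * g x).
    by apply/funext => x; rewrite /g; field; rewrite gt_eqF.
  rewrite /E1 L2normZ ?ger0_norm //; last by case: gD.
  apply: le_trans (leeD2l _ E2g) _.
  have := L2norm_ge0 m g.
  rewrite -EFinD lee_fin; nra.
by move/inf_gauge_le; rewrite -/d; lra.
Qed.

End energy.

Section compactness.
Context (X : ptopologicalType) (R : realType)
  (m : {measure set (Borel X) -> \bar R}) (E : (X -> R) -> \bar R).
Hypotheses (E_ge0 : forall f, L2 m f -> (0 <= E f)%E) (E_lsc : lsc_functional m E)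
  (E_compact : compact_embedding m E)
  (E_null : forall f, L2 m f -> E f = 0%E -> L2eq m f (fun _ => 0)).

Lemma lsc_energy_limit0 (v : nat -> X -> R) g :
  (forall n, L2 m (v n)) -> L2 m g ->
  (fun n => L2norm m (v n \- g)) @ \oo --> 0 ->
  (forall a : R, 0 < a -> \forall n \near \oo, (E (v n) <= a%:E)%E) -> E g = 0%E.
Proof.
move=> vL gL vg Ev_small.
apply/eqP; rewrite eq_le E_ge0 // andbT.
apply/lee_addgt0Pr => a a0; rewrite add0e leNgt; apply/negP => aEg.
have [eta eta0 lsc_g] := E_lsc gL aEg.
have [n [vn_close vn_small]] := filter_ex (filterI (cvgr_lt _ vg _ eta0) (Ev_small a a0)).
by have := lt_le_trans (lsc_g _ (vL n) vn_close) vn_small; rewrite ltxx.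
Qed.

Lemma small_energy_small_L2norm (M eps : R) : 0 < eps ->
  exists2 delta : R, 0 < delta & forall u, Dspace m E u -> Dnorm m E u <= M ->
    (E u <= delta%:E)%E -> L2norm m u <= eps.
Proof.
move=> eps0; apply: contrapT => no_delta.
have seq_ex n : exists u, [/\ Dspace m E u, Dnorm m E u <= M,
    (E u <= n.+1%:R^-1%:E)%E & eps < L2norm m u].
  apply: contrapT => no_u; apply: no_delta; exists n.+1%:R^-1 => // u uD uM uE.
  by rewrite leNgt; apply/negP => eps_u; apply: no_u; exists u.
have [u /all_and4[uD uM uE u_large]] := choice seq_ex.
have [phi [g [phi_incr gL vg]]] := E_compact uD uM.
have vL n : L2 m (u (phi n)) by case: (uD (phi n)).
have phi_ge n : (n <= phi n)%N.
  by elim: n => // n IH; apply: leq_ltn_trans IH (phi_incr _ _ (ltnSn n)).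
have Eg0 : E g = 0%E.
  apply: (lsc_energy_limit0 vL gL vg) => _ /posnumP[a].
  near=> n; apply: le_trans (uE (phi n)) _; rewrite lee_fin.
  apply: le_trans (ltW (_ : n.+1%:R^-1 < a%:num)).
    by rewrite lef_pV2 ?posrE // ler_nat ltnS.
  by near: n; exact: near_infty_natSinv_lt.
have [n un_close] := filter_ex (cvgr_lt _ vg _ eps0).
have := u_large (phi n).
by rewrite -(L2norm_sub_null (vL n) gL (E_null gL Eg0)) ltNge ltW.
Unshelve. all: by end_near.
Qed.

End compactness.

Theorem mainTheorem2 (X : ptopologicalType) (R : realType)
    (m : {measure set (Borel X) -> \bar R}) (E : (X -> R) -> \bar R) :
  hausdorff_space X -> full_support m ->
  dirichlet_form m E -> even_functional m E ->
  compact_embedding m E ->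
  (forall f, L2 m f -> (E f = 0%E <-> L2eq m f (fun _ => 0))) ->
  exists2 C : R, 0 < C &
    forall f, Dspace m E f -> Dnorm m E f <= C * Dseminorm E f.
Proof.
move=> _ _ [[E_ge0 _] E_convex E_lsc _ _] [E_cst0 _] E_compact E_null.
have quarter_gt0 : 0 < 4^-1 :> R by rewrite invr_gt0.
have [delta delta0 control] := small_energy_small_L2norm E_ge0 E_lsc E_compact
  (fun f fL => (E_null f fL).1) 2 quarter_gt0.
pose delta' := Num.min delta 4^-1.
have delta'0 : 0 < delta' by rewrite lt_min delta0.
exists delta'^-1; first by rewrite invr_gt0.
have delta'_small : delta' <= 4^-1 by rewrite ge_min lexx orbT.
apply: (Dnorm_le_of_energy_control E_ge0 E_convex E_cst0 delta'0 delta'_small).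
move=> u uD uM uE; apply: control => //.
by apply: le_trans uE _; rewrite lee_fin ge_min lexx.
Qed.
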